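(* Let $N\ge 2$ and let $r:\{0,\dots,N-1\}\to\{0,\dots,N-1\}$ be $r(k)=N-1-k$. Let $\pi$ be a permutation of $\{0,\dots,N-1\}$ with $\pi\circ r=r\circ\pi$ and $\pi(0)\in\{0,N-1\}$, and let $\rho\in\{\pi,\ r\circ\pi\}$. For a partial $N\times N$ array $A$ (some cells filled with symbols from $\{0,\dots,N-1\}$) whose first row is completely filled with a permutation of $\{0,\dots,N-1\}$, define the partial array $T(A)$ by $T(A)[\pi(i)][\rho(j)]=A[i][j]$ (cell $(\pi(i),\rho(j))$ of $T(A)$ is filled iff cell $(i,j)$ of $A$ is filled), and define $\mu(A)=\tau\circ T(A)$, where $\tau$ is the unique permutation of the symbols $\{0,\dots,N-1\}$ such that the first row of $\tau\circ T(A)$ is $0,1,\dots,N-1$ (i.e. every filled entry $x$ is replaced by $\tau(x)$). Let $H_1$ and $H_2$ be hourglass designs of order $N$ with $H_2=\mu(H_1)$. Then the number of normalized diagonal Latin squares of order $N$ that agree with $H_1$ on all filled cells of $H_1$ equals the number of normalized diagonal Latin squares of order $N$ that agree with $H_2$ on all filled cells of $H_2$.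
   Context: A diagonal Latin square of order $N$ is an $N\times N$ array with entries in $\{0,\dots,N-1\}$ such that every row, every column, the main diagonal (cells $(i,i)$) and the main antidiagonal (cells $(i,N-1-i)$) each contain every element of $\{0,\dots,N-1\}$ exactly once; rows and columns are indexed $0,\dots,N-1$. It is normalized if its first row (row $0$) is $0,1,\dots,N-1$ in this order. A hourglass design of order $N$ is a partial $N\times N$ array in which exactly the cells of row $0$, row $N-1$, the main diagonal and the main antidiagonal are filled with symbols from $\{0,\dots,N-1\}$, the first row is $0,1,\dots,N-1$, and no symbol occurs twice among the filled cells of any row, any column, the main diagonal, or the main antidiagonal. *)

From mathcomp Require Import all_boot all_fingroup.
Set Implicit Arguments. Unset Strict Implicit. Unset Printing Implicit Defensive.

(* Cells are pairs (row, column) in 'I_N * 'I_N; symbols are 'I_N.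
   A partial array is a map cell -> option symbol (None = empty cell).
   The reflection r(k) = N-1-k is rev_ord. *)

Definition parray (N : nat) := {ffun 'I_N * 'I_N -> option 'I_N}.
Definition sqarray (N : nat) := {ffun 'I_N * 'I_N -> 'I_N}.

Definition diag_latin N (L : sqarray N) : bool :=
  [&& [forall i : 'I_N, injectiveb (fun j : 'I_N => L (i, j))],
      [forall j : 'I_N, injectiveb (fun i : 'I_N => L (i, j))],
      injectiveb (fun i : 'I_N => L (i, i))
    & injectiveb (fun i : 'I_N => L (i, rev_ord i))].

Definition normalized N (L : sqarray N) : bool :=
  [forall i : 'I_N, forall j : 'I_N, (val i == 0) ==> (L (i, j) == j)].

Definition agrees N (H : parray N) (L : sqarray N) : bool :=
  [forall c, (H c != None) ==> (H c == Some (L c))].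

Definition n_completions N (H : parray N) : nat :=
  #|[pred L : sqarray N | [&& diag_latin L, normalized L & agrees H L]]|.

Definition no_repeat N (H : parray N) (line : 'I_N * 'I_N -> bool)
  (same : 'I_N * 'I_N -> 'I_N * 'I_N -> bool) : Prop :=
  forall c1 c2, line c1 -> line c2 -> same c1 c2 -> c1 != c2 ->
    H c1 != None -> H c1 != H c2.

Definition hourglass N (H : parray N) : Prop :=
  (forall c : 'I_N * 'I_N,
     (H c != None) =
     [|| val c.1 == 0, val c.1 == N - 1, val c.1 == val c.2
       | val c.1 + val c.2 == N - 1]) /\
  (forall i j : 'I_N, val i = 0 -> H (i, j) = Some j) /\
  no_repeat H predT (fun c1 c2 => c1.1 == c2.1) /\
  no_repeat H predT (fun c1 c2 => c1.2 == c2.2) /\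
  no_repeat H (fun c => c.1 == c.2) (fun _ _ => true) /\
  no_repeat H (fun c => val c.1 + val c.2 == N - 1) (fun _ _ => true).

Definition is_mu_image N (pi rho : {perm 'I_N}) (A B : parray N) : Prop :=
  exists tau : {perm 'I_N},
    (forall i j : 'I_N, B (pi i, rho j) = omap tau (A (i, j))) /\
    (forall i j : 'I_N, val i = 0 -> B (i, j) = Some j).

From mathcomp Require Import all_boot all_fingroup.
Set Implicit Arguments. Unset Strict Implicit. Unset Printing Implicit Defensive.

(* The triple (pi, rho, tau) acts on full squares by the isotopy
   L |-> tau o L o (pi x rho)^-1.  Since pi commutes with the reflection r and
   rho is pi or r o pi, the isotopy sends the main diagonal and antidiagonal
   onto themselves or onto each other, so it preserves diagonal Latin squares;
   as H2 = mu(H1) it sends completions of H1 to completions of H2, and the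
   inverse triple sends them back.  Normalization comes for free, since both
   arrays have first row 0, 1, ..., N-1. *)

Lemma injective_relabel (T : finType) (U V : Type) (sigma : {perm T})
    (f : T -> U) (g : T -> V) (h : U -> V) :
  (forall k, g (sigma k) = h (f k)) -> injective h -> injective f ->
  injective g.
Proof.
move=> gE inj_h inj_f x y.
by rewrite -(permKV sigma x) -(permKV sigma y) !gE => /inj_h/inj_f ->.
Qed.

Definition completions N (H : parray N) : {set sqarray N} :=
  [set L | diag_latin L && agrees H L].

Lemma n_completionsE N (H : parray N) :
  (forall i j : 'I_N, val i = 0 -> H (i, j) = Some j) ->
  n_completions H = #|completions H|.
Proof.
move=> row0; apply: eq_card => L; rewrite !inE /=.
case: (diag_latin L) => //=; apply: andb_idl => /forallP agreeL.
apply/forallP => i; apply/forallP => j; apply/implyP => /eqP i0.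
by have := agreeL (i, j); rewrite row0 //= => /eqP [<-].
Qed.

Section Isotopy.

Variables (N : nat) (pi rho tau : {perm 'I_N}).

Definition isotope (L : sqarray N) : sqarray N :=
  [ffun c => tau (L ((pi^-1)%g c.1, (rho^-1)%g c.2))].

Lemma isotopeE L i j : isotope L (pi i, rho j) = tau (L (i, j)).
Proof. by rewrite ffunE /= !permK. Qed.

Lemma isotope_inj : injective isotope.
Proof.
move=> L1 L2 eqL; apply/ffunP => -[i j].
by apply: (@perm_inj _ tau); rewrite -!isotopeE eqL.
Qed.

Lemma isotope_agrees (H1 H2 : parray N) L :
  (forall i j, H2 (pi i, rho j) = omap tau (H1 (i, j))) ->
  agrees H1 L -> agrees H2 (isotope L).
Proof.
move=> H2E /forallP agreeL; apply/forallP => -[i j].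
rewrite -(permKV pi i) -(permKV rho j) H2E isotopeE.
by have := agreeL ((pi^-1)%g i, (rho^-1)%g j); case: (H1 _) => //= x /eqP [->].
Qed.

Hypothesis pi_rev : forall k, pi (rev_ord k) = rev_ord (pi k).
Hypothesis rho_pi :
  (forall k, rho k = pi k) \/ (forall k, rho k = rev_ord (pi k)).

Lemma isotope_diag_latin L : diag_latin L -> diag_latin (isotope L).
Proof.
move=> /and4P[/forallP rowL /forallP colL /injectiveP diagL /injectiveP antiL].
have rows i : injective (fun j => isotope L (i, j)).
  apply: (injective_relabel (sigma := rho) _ (@perm_inj _ tau)
           (injectiveP _ (rowL ((pi^-1)%g i)))).
  by move=> j; rewrite -[i in (i, _)](permKV pi) isotopeE.
have cols j : injective (fun i => isotope L (i, j)).
  apply: (injective_relabel (sigma := pi) _ (@perm_inj _ tau)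
           (injectiveP _ (colL ((rho^-1)%g j)))).
  by move=> i; rewrite -[j in (_, j)](permKV rho) isotopeE.
have [diag anti] : injective (fun k => isotope L (k, k)) /\
                   injective (fun k => isotope L (k, rev_ord k)).
  have relabel (f g : 'I_N -> 'I_N) :
      injective f -> (forall k, g (pi k) = tau (f k)) -> injective g.
    by move=> inj_f gE; apply: injective_relabel gE (@perm_inj _ tau) inj_f.
  case: rho_pi => rhoE; split.
  - by apply: (relabel _ _ diagL) => i; rewrite -[X in (_, X)]rhoE isotopeE.
  - apply: (relabel _ _ antiL) => i.
    by rewrite -pi_rev -[X in (_, X)]rhoE isotopeE.
  - apply: (relabel _ _ antiL) => i.
    by rewrite -[X in (_, X)](rev_ordK (pi i)) -pi_rev -rhoE isotopeE.
  - by apply: (relabel _ _ diagL) => i; rewrite -rhoE isotopeE.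
apply/and4P; split; try exact/injectiveP.
- by apply/forallP => i; apply/injectiveP.
- by apply/forallP => j; apply/injectiveP.
Qed.

Lemma card_completions_le (H1 H2 : parray N) :
  (forall i j, H2 (pi i, rho j) = omap tau (H1 (i, j))) ->
  #|completions H1| <= #|completions H2|.
Proof.
move=> H2E; rewrite -(card_imset _ isotope_inj); apply/subset_leq_card/subsetP.
move=> _ /imsetP[L + ->]; rewrite !inE => /andP[latinL agreeL].
by rewrite isotope_diag_latin // (isotope_agrees H2E).
Qed.

End Isotopy.

Lemma perm_revV N (pi : {perm 'I_N}) :
  (forall k, pi (rev_ord k) = rev_ord (pi k)) ->
  forall k, (pi^-1)%g (rev_ord k) = rev_ord ((pi^-1)%g k).
Proof. by move=> pi_rev k; apply: (@perm_inj _ pi); rewrite pi_rev !permKV. Qed.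

Lemma rho_piV N (pi rho : {perm 'I_N}) :
  (forall k, pi (rev_ord k) = rev_ord (pi k)) ->
  ((forall k, rho k = pi k) \/ (forall k, rho k = rev_ord (pi k))) ->
  (forall k, (rho^-1)%g k = (pi^-1)%g k) \/
  (forall k, (rho^-1)%g k = rev_ord ((pi^-1)%g k)).
Proof.
move=> pi_rev [] rhoE; [left | right] => k; apply: (@perm_inj _ rho).
  by rewrite permKV rhoE permKV.
by rewrite permKV rhoE pi_rev rev_ordK permKV.
Qed.

Lemma relabelV N (pi rho tau : {perm 'I_N}) (H1 H2 : parray N) :
  (forall i j, H2 (pi i, rho j) = omap tau (H1 (i, j))) ->
  forall i j, H1 ((pi^-1)%g i, (rho^-1)%g j) = omap (tau^-1)%g (H2 (i, j)).
Proof.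
move=> H2E i j; rewrite -[in RHS](permKV pi i) -[in RHS](permKV rho j) H2E.
by case: (H1 _) => //= x; rewrite permK.
Qed.

Theorem proposition1 (N : nat) (hN : 2 <= N) (pi rho : {perm 'I_N})
  (hcomm : forall k : 'I_N, pi (rev_ord k) = rev_ord (pi k))
  (hpi0 : forall i : 'I_N, val i = 0 -> val (pi i) = 0 \/ val (pi i) = N - 1)
  (hrho : (forall k : 'I_N, rho k = pi k) \/
          (forall k : 'I_N, rho k = rev_ord (pi k)))
  (H1 H2 : parray N) (hH1 : hourglass H1) (hH2 : hourglass H2)
  (hmu : is_mu_image pi rho H1 H2) :
  n_completions H1 = n_completions H2.
Proof.
case: hH1 => _ [row0_H1 _]; case: hH2 => _ [row0_H2 _].
case: hmu => tau [H2E _].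
rewrite (n_completionsE row0_H1) (n_completionsE row0_H2).
apply/eqP; rewrite eqn_leq (card_completions_le hcomm hrho H2E) /=.
exact: (card_completions_le (perm_revV hcomm) (rho_piV hcomm hrho) (relabelV H2E)).
Qed.
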